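(* Let $A_1,\dots,A_m\in\mathbb{C}^{n\times n}$ be Hermitian matrices. There do not exist $P\in\mathrm{GL}_n(\mathbb{C})$, $t\ge 2$ and positive integers $n_1,\dots,n_t$ with $\sum_jn_j=n$ such that every $P^*A_iP$ is block diagonal with diagonal blocks of sizes $n_1,\dots,n_t$ if and only if the only matrices $X\in Z(A_1,\dots,A_m)$ with $X^2=X$ are $0$ and $I_n$.
   Context: For Hermitian $A_1,\dots,A_m\in\mathbb{C}^{n\times n}$, the center is $Z(A_1,\dots,A_m)=\{X\in\mathbb{C}^{n\times n} : (A_iX)^*=A_iX \text{ for all } i\}$, where $^*$ denotes conjugate transpose. *)

From HB Require Import structures.
From mathcomp Require Import all_boot all_order all_algebra.
From mathcomp Require Import reals complex.
Set Implicit Arguments. Unset Strict Implicit. Unset Printing Implicit Defensive.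
Import Order.TTheory GRing.Theory Num.Theory.
Local Open Scope ring_scope.

Definition ctrmx (C : numClosedFieldType) (m n : nat) (A : 'M[C]_(m, n)) : 'M[C]_(n, m) :=
  (map_mx Num.conj A)^T.

Definition is_hermitian_mx (C : numClosedFieldType) (n : nat) (A : 'M[C]_n) : Prop :=
  ctrmx A = A.

Definition herm_center (C : numClosedFieldType) (m n : nat) (A : 'I_m -> 'M[C]_n)
  (X : 'M[C]_n) : Prop :=
  forall i : 'I_m, ctrmx (A i *m X) = A i *m X.

(* Block index of k for consecutive blocks of sizes s = [n_1; ...; n_t]:
   the number of j < t with n_1 + ... + n_(j+1) <= k (0-based). *)
Definition blk_index (s : seq nat) (k : nat) : nat :=
  count (fun j => \sum_(l < j.+1) nth 0%N s l <= k)%N (iota 0 (size s)).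

Definition block_diag_of (C : numClosedFieldType) (n : nat) (s : seq nat)
  (M : 'M[C]_n) : Prop :=
  forall i j : 'I_n, blk_index s i != blk_index s j -> M i j = 0.

From HB Require Import structures.
From mathcomp Require Import all_boot all_order all_algebra.
From mathcomp Require Import reals complex.
Import Order.TTheory GRing.Theory Num.Theory.
Local Open Scope ring_scope.

(* An idempotent X is similar to a diagonal 0/1 matrix D: X = P D P^-1.  Since
   A_k (P D P^-1) = P^-* (P^* A_k P D) P^-1, X lies in Z(A_1, ..., A_m) exactly
   when every B_k := P^* A_k P makes B_k D Hermitian, i.e. commutes with D, i.e.
   vanishes outside the diagonal blocks cut out by D.  So nontrivial idempotents
   of the center and congruences to a block-diagonal form with at least two
   blocks correspond to each other. *)

Definition diag_ind (R : pzRingType) {n} (c : 'I_n -> bool) : 'M[R]_n :=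
  diag_mx (\row_i (c i)%:R).

Lemma diag_ind_idem (R : pzRingType) n (c : 'I_n -> bool) :
  diag_ind R c *m diag_ind R c = diag_ind R c.
Proof.
by apply/matrixP=> i j; rewrite mul_diag_mx !mxE mulrnAr -natrM mulnb andbb.
Qed.

Lemma pid_mx_diag_ind (R : pzRingType) n r :
  pid_mx r = diag_ind R (fun i : 'I_n => (i < r)%N).
Proof.
apply/matrixP=> i j; rewrite !mxE; case: (eqVneq i j) => [->|ij]; first by rewrite eqxx.
by move: ij; rewrite -val_eqE => /negPf ->.
Qed.

Section ConjugateTranspose.
Variable C : numClosedFieldType.

Lemma ctrmxM m n p (A : 'M[C]_(m, n)) (B : 'M_(n, p)) :
  ctrmx (A *m B) = ctrmx B *m ctrmx A.
Proof. by rewrite /ctrmx map_mxM trmx_mul. Qed.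

Lemma ctrmxK m n : cancel (@ctrmx C m n) (@ctrmx C n m).
Proof. by move=> A; apply/matrixP=> i j; rewrite !mxE conjCK. Qed.

Lemma ctrmx1 n : ctrmx (1%:M : 'M[C]_n) = 1%:M.
Proof. by rewrite /ctrmx map_mx1 trmx1. Qed.

Lemma ctrmx_congr n (P M : 'M[C]_n) :
  ctrmx (ctrmx P *m M *m P) = ctrmx P *m ctrmx M *m P.
Proof. by rewrite !ctrmxM ctrmxK mulmxA. Qed.

Lemma congr_mx_inj n (P M N : 'M[C]_n) : P \in unitmx ->
  ctrmx P *m M *m P = ctrmx P *m N *m P -> M = N.
Proof.
move=> P_unit /(congr1 (fun K => ctrmx (invmx P) *m K *m invmx P)).
have PVP M' : ctrmx (invmx P) *m (ctrmx P *m M' *m P) *m invmx P = M'.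
  by rewrite mulmxA mulmxK // mulmxA -ctrmxM mulmxV // ctrmx1 mul1mx.
by rewrite !PVP.
Qed.

Lemma herm_center_conj m n (A : 'I_m -> 'M[C]_n) (P D : 'M[C]_n) :
  P \in unitmx ->
  herm_center A (P *m D *m invmx P) <->
  herm_center (fun k => ctrmx P *m A k *m P) D.
Proof.
move=> P_unit; set Q := invmx P.
have AX k : A k *m (P *m D *m Q) = ctrmx Q *m (ctrmx P *m A k *m P *m D) *m Q.
  by rewrite !mulmxA -ctrmxM mulmxV // ctrmx1 mul1mx.
have Q_unit : Q \in unitmx by rewrite unitmx_inv.
split=> Z k; move: (Z k); rewrite AX ctrmx_congr.
  exact: congr_mx_inj.
by move->.
Qed.

Lemma ctrmx_diag_ind n (c : 'I_n -> bool) : ctrmx (diag_ind C c) = diag_ind C c.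
Proof.
apply/matrixP=> i j; rewrite !mxE rmorphMn /= conjC_nat eq_sym.
by case: (eqVneq i j) => [->|].
Qed.

Lemma herm_mul_diag_indP {n} {B : 'M[C]_n} (c : 'I_n -> bool) :
  is_hermitian_mx B ->
  ctrmx (B *m diag_ind C c) = B *m diag_ind C c <->
  (forall i j, c i != c j -> B i j = 0).
Proof.
rewrite /is_hermitian_mx => B_herm; rewrite ctrmxM ctrmx_diag_ind B_herm.
split=> [/matrixP BD i j | B0].
  move: (BD i j); rewrite mul_diag_mx mul_mx_diag !mxE.
  by case: (c i); case: (c j); rewrite ?mulr1 ?mul1r ?mulr0 ?mul0r // => ->.
apply/matrixP=> i j; rewrite mul_diag_mx mul_mx_diag !mxE.
case: (eqVneq (c i) (c j)) => [->|/B0 ->]; first exact: mulrC.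
by rewrite mulr0 mul0r.
Qed.

Lemma herm_center_conj_diag_ind m n (A : 'I_m -> 'M[C]_n) (P : 'M[C]_n)
    (c : 'I_n -> bool) :
  (forall k, is_hermitian_mx (A k)) -> P \in unitmx ->
  herm_center A (P *m diag_ind C c *m invmx P) <->
  (forall k i j, c i != c j -> (ctrmx P *m A k *m P) i j = 0).
Proof.
move=> A_herm P_unit; rewrite herm_center_conj //.
have B_herm k : is_hermitian_mx (ctrmx P *m A k *m P).
  by rewrite /is_hermitian_mx ctrmx_congr A_herm.
by split=> BD k /=; apply/(herm_mul_diag_indP c (B_herm k)); apply: BD.
Qed.

End ConjugateTranspose.

Section Idempotent.
Context {F : fieldType} {n : nat} {X : 'M[F]_n} (X_idem : X *m X = X).

Let Y := 1%:M - X.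

Lemma idem_sub_mul {p} {M : 'M_(p, n)} : (M <= X)%MS -> M *m X = M.
Proof. by case/submxP=> D ->; rewrite -mulmxA X_idem. Qed.

Lemma idem_compl_sub_mul {p} {M : 'M_(p, n)} : (M <= Y)%MS -> M *m X = 0.
Proof. by case/submxP=> D ->; rewrite -mulmxA mulmxBl X_idem mul1mx subrr mulmx0. Qed.

Lemma idem_cap_compl : (X :&: Y)%MS = 0.
Proof.
by rewrite -(idem_sub_mul (capmxSl X Y)) (idem_compl_sub_mul (capmxSr X Y)).
Qed.

Lemma idem_rank_compl : (\rank X + \rank Y)%N = n.
Proof.
rewrite -(mxrank_disjoint_sum idem_cap_compl); apply/eqP.
rewrite eqn_leq rank_leq_col -{1}(mxrank1 F n) mxrankS //.
by rewrite -(subrKC X 1%:M) addmx_sub_adds.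
Qed.

Lemma idem_similar_pid :
  exists2 Q : 'M_n, Q \in unitmx & Q *m X = pid_mx (\rank X) *m Q.
Proof.
set Q := col_mx (row_base X) (row_base Y).
have Q_free : row_free Q.
  rewrite /row_free -(addsmxE _ _).1.
  by rewrite (adds_eqmx (eq_row_base X) (eq_row_base Y)).1 (mxrank_disjoint_sum idem_cap_compl).
have QX : Q *m X = pid_mx (\rank X) *m Q.
  rewrite mul_col_mx idem_sub_mul ?eq_row_base // idem_compl_sub_mul ?eq_row_base //.
  by rewrite pid_mx_block mul_block_col !mul1mx !mul0mx addr0 add0r.
(* Q has \rank X + \rank (1 - X) rows; rewrite that height to n to make it square. *)
move: Q Q_free QX; rewrite idem_rank_compl => Q Q_free QX.
by exists Q; rewrite -?row_free_unit.
Qed.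

Lemma idem_full_rank : \rank X = n -> X = 1%:M.
Proof.
move=> /eqP full; have X_unit : X \in unitmx by rewrite -row_free_unit.
by rewrite -(mulmxV X_unit) -{2}X_idem mulmxK.
Qed.

End Idempotent.

Lemma blk_index_pair r n k :
  (k < n)%N -> (r <= n)%N -> blk_index [:: r; (n - r)%N] k = (r <= k)%N.
Proof.
move=> lt_kn le_rn; rewrite /blk_index /= !big_ord_recr !big_ord0 /= add0n.
by rewrite subnKC // (leqNgt n k) lt_kn /= !addn0.
Qed.

Lemma blk_index_first a s k : (k < a)%N -> blk_index (a :: s) k = 0%N.
Proof.
move=> lt_ka; apply/eqP; rewrite -leqn0 -(count_pred0 (iota 0 (size (a :: s)))).
apply: sub_count => j /=; rewrite big_ord_recl /= leqNgt.
by rewrite (leq_trans lt_ka) ?leq_addr.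
Qed.

Lemma blk_index_gt0 a b s k : (a <= k)%N -> (0 < blk_index [:: a, b & s] k)%N.
Proof. by move=> le_ak; rewrite /blk_index /= big_ord_recr big_ord0 /= add0n le_ak. Qed.

Definition congr_block_decomposable {C : numClosedFieldType} {m n}
    (A : 'I_m -> 'M[C]_n) : Prop :=
  exists (P : 'M[C]_n) (s : seq nat),
    P \in unitmx /\ (2 <= size s)%N /\ all (fun k => 0 < k)%N s /\
    sumn s = n /\ forall k, block_diag_of s (ctrmx P *m A k *m P).

Section CenterIdempotents.
Context {C : numClosedFieldType} {m n : nat} {A : 'I_m -> 'M[C]_n}.
Hypothesis A_herm : forall k, is_hermitian_mx (A k).

Lemma center_idem_block_decomposable {X : 'M[C]_n} :
  herm_center A X -> X *m X = X -> X != 0 -> X != 1%:M ->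
  congr_block_decomposable A.
Proof.
move=> XZ XX X0 X1; have [Q Q_unit QX] := idem_similar_pid XX.
set r := \rank X in QX.
have r_gt0 : (0 < r)%N by rewrite lt0n mxrank_eq0.
have r_lt_n : (r < n)%N.
  by rewrite ltn_neqAle rank_leq_col andbT; exact: contra_neq (idem_full_rank XX) X1.
have X_conj : X = invmx Q *m diag_ind C (fun i : 'I_n => (i < r)%N) *m invmx (invmx Q).
  by rewrite invmxK -pid_mx_diag_ind -mulmxA -QX mulKmx.
move: XZ; rewrite X_conj herm_center_conj_diag_ind ?unitmx_inv // => Q_blk.
exists (invmx Q), [:: r; (n - r)%N]; rewrite unitmx_inv /= r_gt0 subn_gt0 r_lt_n.
do 3!split=> //; split; first by rewrite addn0 subnKC // ltnW.
move=> k i j; rewrite !blk_index_pair ?(ltnW r_lt_n) // => ij.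
by apply: Q_blk; move: ij; rewrite !ltnNge; case: (r <= i)%N; case: (r <= j)%N.
Qed.

Lemma block_decomposable_center_idem :
  congr_block_decomposable A ->
  exists2 X, herm_center A X & [/\ X *m X = X, X != 0 & X != 1%:M].
Proof.
case=> P [s [P_unit [s_ge2 [s_pos [s_sum P_blk]]]]].
case: s s_ge2 s_pos s_sum P_blk => [|a [|b t]] // _ /and3P[a_gt0 b_gt0 _] s_sum P_blk.
pose c (i : 'I_n) := blk_index [:: a, b & t] i == 0%N.
pose D := diag_ind C c; pose X := P *m D *m invmx P.
have a_lt_n : (a < n)%N by rewrite -s_sum /= -{1}(addn0 a) ltn_add2l addn_gt0 b_gt0.
have first_in : (0 < n)%N := leq_ltn_trans (leq0n a) a_lt_n.
have last_in : (n.-1 < n)%N by rewrite prednK.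
have D_first : D (Ordinal first_in) (Ordinal first_in) = 1.
  by rewrite !mxE eqxx /c blk_index_first.
have D_last : D (Ordinal last_in) (Ordinal last_in) = 0.
  by rewrite !mxE eqxx /c eqn0Ngt blk_index_gt0 // -ltnS prednK.
have D_conj : D = invmx P *m X *m P by rewrite /X !mulmxA mulVmx // mul1mx mulmxKV.
exists X; last split.
- apply/herm_center_conj_diag_ind => // k i j cij.
  by apply: P_blk; apply: contraNneq cij; rewrite /c => ->.
- by rewrite /X !mulmxA mulmxKV // -(mulmxA P) diag_ind_idem.
- apply: contra_neq (@oner_neq0 C) => X0; rewrite -D_first D_conj X0.
  by rewrite mulmx0 mul0mx mxE.
- apply: contra_neq (@oner_neq0 C) => X1; rewrite -D_first -D_last D_conj X1.
  by rewrite mulmx1 mulVmx // !mxE !eqxx.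
Qed.

End CenterIdempotents.

Theorem mainTheorem8 (R : realType) (n m : nat) (A : 'I_m -> 'M[R[i]]_n)
  (hA : forall k, is_hermitian_mx (A k)) :
  ~ (exists (P : 'M[R[i]]_n) (s : seq nat),
        P \in unitmx /\ (2 <= size s)%N /\ all (fun k => 0 < k)%N s /\
        sumn s = n /\
        forall k, block_diag_of s (ctrmx P *m A k *m P))
  <->
  (forall X : 'M[R[i]]_n, herm_center A X -> X *m X = X ->
     X = 0 \/ X = 1%:M).
Proof.
split=> [not_decomposable X XZ XX | idem_trivial decomposable].
  have [->|X0] := eqVneq X 0; first by left.
  have [->|X1] := eqVneq X 1%:M; first by right.
  by case: not_decomposable; exact (center_idem_block_decomposable hA XZ XX X0 X1).
have [X XZ [XX X0 X1]] := block_decomposable_center_idem hA decomposable.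
by case: (idem_trivial X XZ XX) => X01; [move: X0 | move: X1]; rewrite X01 eqxx.
Qed.
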